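(* For CC-MAR, the price of stability is 1; that is, in every instance there is a Nash equilibrium whose total cost equals the minimum total cost over all strategy profiles (in fact every minimum-total-cost strategy profile is a Nash equilibrium).
   Context: A mixed graph $G=(V,E,A)$ has undirected edges $E\subseteq\binom{V}{2}$ with positive integer weights $w_e$ and arcs $A\subseteq V\times V$. A path is a sequence of pairwise distinct vertices in which consecutive vertices are joined by an edge or by an arc in the forward direction. A CC-MAR instance is $(G,\mathcal{T})$ with $\mathcal{T}$ a multiset of $k$ pairs $(s_i,t_i)$, each connected by some path. A strategy profile $\mathcal{P}=\{P_1,\dots,P_k\}$ consists of $s_i$-$t_i$ paths. For $\{u,v\}\in E$, $x_{uv}$ is the number of paths traversing it from $u$ to $v$. Agent $i$'s cost is $\sum w_{uv}x_{vu}$ over edges $\{u,v\}$ traversed by $P_i$ from $u$ to $v$; total cost is $\mathrm{cost}(\mathcal{P})=\sum_{\{u,v\}\in E}w_{uv}x_{uv}x_{vu}$. A Nash equilibrium is a profile where no agent can strictly lower its own cost by unilaterally changing its path. The price of stability is the ratio of the minimum total cost of a Nash equilibrium to the minimum total cost of any profile. *)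

From mathcomp Require Import all_boot all_order.
Set Implicit Arguments. Unset Strict Implicit. Unset Printing Implicit Defensive.

(* A mixed graph on the finite vertex type V:
   - E : {set {set V}}  the undirected edges (each a 2-element set {u,v}),
   - w : {set V} -> nat the edge weights (positive on E),
   - A : {set V * V}    the arcs (u,v), traversable only from u to v.

   A path from s is given by its start vertex s and a list of steps; a step
   (v, b) moves from the current vertex u to v, through the edge {u,v}
   if b = true and through the arc (u,v) if b = false.  (Recording which
   kind of connection is used disambiguates the case where a pair is joined
   both by an edge and an arc.) *)

Section MixedGraph.
Variable V : finType.
Variable E : {set {set V}}.
Variable w : {set V} -> nat.
Variable A : {set V * V}.

Definition step_ok (u : V) (st : V * bool) : bool :=
  if st.2 then [set u; st.1] \in E else (u, st.1) \in A.

Fixpoint steps_ok (u : V) (p : seq (V * bool)) : bool :=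
  match p with
  | [::] => true
  | st :: p' => step_ok u st && steps_ok st.1 p'
  end.

Definition is_path (s t : V) (p : seq (V * bool)) : bool :=
  [&& steps_ok s p, uniq (s :: map fst p) & last s (map fst p) == t].

Fixpoint edge_trav (u : V) (p : seq (V * bool)) : seq (V * V) :=
  match p with
  | [::] => [::]
  | st :: p' => (if st.2 then [:: (u, st.1)] else [::]) ++ edge_trav st.1 p'
  end.

Variable k : nat.
Variable T : 'I_k -> V * V.

Definition profile := 'I_k -> seq (V * bool).

Definition valid_profile (P : profile) : Prop :=
  forall i, is_path (T i).1 (T i).2 (P i).

Definition x (P : profile) (u v : V) : nat :=
  \sum_(i < k) ((u, v) \in edge_trav (T i).1 (P i)).

Definition agent_cost (P : profile) (i : 'I_k) : nat :=
  \sum_(e <- edge_trav (T i).1 (P i)) w [set e.1; e.2] * x P e.2 e.1.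

Definition total_cost (P : profile) : nat :=
  \sum_(u : V) \sum_(v : V | (enum_rank u < enum_rank v)%N && ([set u; v] \in E))
     w [set u; v] * x P u v * x P v u.

Definition deviate (P : profile) (i : 'I_k) (p : seq (V * bool)) : profile :=
  fun j => if j == i then p else P j.

Definition nash_equilibrium (P : profile) : Prop :=
  valid_profile P /\
  forall (i : 'I_k) (p : seq (V * bool)), is_path (T i).1 (T i).2 p ->
    (agent_cost P i <= agent_cost (deviate P i p) i)%N.

Definition optimal_profile (P : profile) : Prop :=
  valid_profile P /\
  forall Q : profile, valid_profile Q -> (total_cost P <= total_cost Q)%N.

End MixedGraph.

(* The total cost is an exact potential: for every agent i,
     total_cost P = (cost of the profile without agent i) + agent_cost P i,
   because agent i pays w_uv times the number of *other* paths crossing its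
   edges in the opposite direction (it never crosses an edge both ways, its
   path being simple).  A unilateral deviation of i leaves the first summand
   unchanged, so it changes the total cost and i's cost by the same amount.
   Hence minimisers of the total cost, which exist since costs are natural
   numbers, are Nash equilibria. *)

From mathcomp Require Import all_boot all_order.
From mathcomp Require Import zify.
From Stdlib Require Import Classical.
Set Implicit Arguments. Unset Strict Implicit. Unset Printing Implicit Defensive.

Lemma nat_valued_minimizer (X : Type) (P : X -> Prop) (f : X -> nat) (x0 : X) :
  P x0 -> exists2 x, P x & forall y, P y -> f x <= f y.
Proof.
move: {2}(f x0) (leqnn (f x0)) => n; elim: n x0 => [|n IHn] x0 fx0 Px0.
  by exists x0 => // y _; move: fx0; rewrite leqn0 => /eqP ->.
have [[y [Py fy_lt]]|no_smaller] := classic (exists y, P y /\ f y < f x0).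
  by apply: (IHn y) => //; rewrite -ltnS (leq_trans fy_lt).
exists x0 => // y Py; rewrite leqNgt; apply/negP => fy_lt.
by apply: no_smaller; exists y.
Qed.

Lemma sum_unordered_pairs (V : finType) (F : V -> V -> nat) :
  (forall u, F u u = 0) ->
  \sum_u \sum_v F u v =
  \sum_u \sum_(v | enum_rank u < enum_rank v) (F u v + F v u).
Proof.
move=> F_diag0.
have split_row u : \sum_v F u v =
    \sum_(v | enum_rank u < enum_rank v) F u v +
    \sum_(v | enum_rank v < enum_rank u) F u v.
  rewrite (bigID (fun v => enum_rank u < enum_rank v)) /=; congr (_ + _).
  rewrite big_mkcond [RHS]big_mkcond; apply: eq_bigr => v _.
  case: ltngtP => // /val_inj/enum_rank_inj ->.
  by rewrite F_diag0.
rewrite (eq_bigr _ (fun u _ => split_row u)) big_split /=.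
rewrite [X in _ + X](exchange_big_dep predT) //= -big_split /=.
by apply: eq_bigr => u _; rewrite big_split.
Qed.

Section SimplePaths.
Variables (V : finType) (E : {set {set V}}) (A : {set V * V}).

Lemma edge_trav_snd (s : V) p u v :
  (u, v) \in edge_trav s p -> v \in map fst p.
Proof.
elim: p s => [|[v1 b] p IHp] s //=; rewrite mem_cat => /orP[].
  by case: b => //=; rewrite inE => /eqP [_ ->]; rewrite inE eqxx.
by move/IHp; rewrite inE => ->; rewrite orbT.
Qed.

Lemma edge_trav_edge (s : V) p u v :
  steps_ok E A s p -> (u, v) \in edge_trav s p -> [set u; v] \in E.
Proof.
elim: p s => [|[v1 b] p IHp] s //= /andP[ok_st ok_p].
rewrite mem_cat => /orP[]; last exact: IHp.
by case: b ok_st => //= ok_st; rewrite inE => /eqP [-> ->].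
Qed.

Lemma uniq_edge_trav (s : V) p :
  uniq (s :: map fst p) -> uniq (edge_trav s p).
Proof.
elim: p s => [|[v1 b] p IHp] s //= /and3P[_ v1_notin uniq_p].
rewrite cat_uniq IHp /= ?v1_notin ?uniq_p //.
case: b => /=; rewrite andbT; apply/hasPn => -[a c] /edge_trav_snd //.
by apply: contraL; rewrite inE => /eqP[_ ->].
Qed.

Lemma edge_trav_oneway (s : V) p u v :
  uniq (s :: map fst p) -> (u, v) \in edge_trav s p ->
  (v, u) \notin edge_trav s p.
Proof.
elim: p s => [|[v1 b] p IHp] s //= /andP[]; rewrite inE negb_or.
case/andP=> s_neq_v1 s_notin uniq_p; rewrite !mem_cat.
case: b => /=; last exact: IHp.
have s_notin_trav x : (x, s) \notin edge_trav v1 p.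
  by apply: contra s_notin => /edge_trav_snd.
rewrite !inE; case/orP=> [/eqP[-> ->]|uv_in]; rewrite negb_or.
  by rewrite s_notin_trav xpair_eqE [v1 == s]eq_sym (negbTE s_neq_v1).
rewrite (IHp _ uniq_p uv_in) andbT.
by apply: contraTneq uv_in => -[-> _]; apply: s_notin_trav.
Qed.

End SimplePaths.

Lemma potential_pair_split (c a b : nat) (buv bvu : bool) :
  ~~ (buv && bvu) ->
  c * (buv + a) * (bvu + b) = c * a * b + (buv * (c * b) + bvu * (c * a)).
Proof. by case: buv; case: bvu => //= _; rewrite !(add0n, mul0n, mul1n); lia.
Qed.

Section Potential.
Variables (V : finType) (E : {set {set V}}) (w : {set V} -> nat).
Variables (A : {set V * V}) (k : nat) (T : 'I_k -> V * V).
Hypothesis edge_card2 : forall e, e \in E -> #|e| = 2.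

Definition uses (P : profile V k) (i : 'I_k) (u v : V) : nat :=
  (u, v) \in edge_trav (T i).1 (P i).

Definition others_flow (P : profile V k) (i : 'I_k) (u v : V) : nat :=
  \sum_(j < k | j != i) uses P j u v.

Definition others_cost (P : profile V k) (i : 'I_k) : nat :=
  \sum_u \sum_(v | (enum_rank u < enum_rank v) && ([set u; v] \in E))
     w [set u; v] * others_flow P i u v * others_flow P i v u.

Lemma x_uses_others (P : profile V k) i u v :
  x T P u v = uses P i u v + others_flow P i u v.
Proof. by rewrite /x (bigD1 i). Qed.

Lemma agent_costE (P : profile V k) i :
  is_path E A (T i).1 (T i).2 (P i) ->
  agent_cost w T P i =
  \sum_u \sum_v uses P i u v * (w [set u; v] * others_flow P i v u).
Proof.
case/and3P=> _ uniq_Pi _.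
rewrite /agent_cost big_uniq; last exact: uniq_edge_trav.
rewrite big_mkcond /= [RHS]pair_big /=; apply: eq_bigr => -[u v] _ /=.
rewrite /uses; case: ifP => [uv_in|_]; last by rewrite mul0n.
rewrite (x_uses_others _ i) /uses.
by rewrite (negbTE (edge_trav_oneway uniq_Pi uv_in)) mul1n.
Qed.

Lemma total_cost_potential (P : profile V k) i :
  is_path E A (T i).1 (T i).2 (P i) ->
  total_cost E w T P = others_cost P i + agent_cost w T P i.
Proof.
move=> Pi_path; rewrite (agent_costE Pi_path).
case/and3P: Pi_path => ok_Pi uniq_Pi _.
rewrite sum_unordered_pairs; last first.
  move=> u; rewrite /uses; case: ((u, u) \in _) /idP => // uu_in.
  by move: (edge_card2 (edge_trav_edge ok_Pi uu_in)); rewrite setUid cards1.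
rewrite /total_cost /others_cost -big_split /=; apply: eq_bigr => u _.
rewrite big_mkcond [X in _ = X + _]big_mkcond [X in _ = _ + X]big_mkcond.
rewrite -big_split /=; apply: eq_bigr => v _.
case: (enum_rank u < enum_rank v) => //=.
rewrite (x_uses_others _ i u v) (x_uses_others _ i v u) [[set v; u]]setUC /uses.
case: ifP => [_|uv_nonedge].
  rewrite potential_pair_split //; apply/negP => /andP[uv_in].
  exact/negP/edge_trav_oneway.
have untraversed a b :
    [set a; b] = [set u; v] -> (a, b) \notin edge_trav (T i).1 (P i).
  move=> ab_uv; apply/negP => /(edge_trav_edge ok_Pi).
  by rewrite ab_uv uv_nonedge.
rewrite (negbTE (untraversed u v erefl)).
by rewrite (negbTE (untraversed v u (setUC _ _))).
Qed.

Lemma others_cost_deviate (P : profile V k) i p :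
  others_cost (deviate P i p) i = others_cost P i.
Proof.
have flowE u v : others_flow (deviate P i p) i u v = others_flow P i u v.
  by apply: eq_bigr => j /negbTE j_neq_i; rewrite /uses /deviate j_neq_i.
by apply: eq_bigr => u _; apply: eq_bigr => v _; rewrite !flowE.
Qed.

Lemma optimal_profile_nash (P : profile V k) :
  optimal_profile E w A T P -> nash_equilibrium E w A T P.
Proof.
move=> [P_valid P_opt]; split => // i p p_path.
have dev_valid : valid_profile E A T (deviate P i p).
  by move=> j; rewrite /deviate; case: eqP => [->|].
have dev_path : is_path E A (T i).1 (T i).2 (deviate P i p i).
  by rewrite /deviate eqxx.
move: (P_opt _ dev_valid).
rewrite (total_cost_potential (P_valid i)) (total_cost_potential dev_path).
by rewrite others_cost_deviate leq_add2l.
Qed.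

End Potential.

Theorem mainTheorem2
  (V : finType) (E : {set {set V}}) (w : {set V} -> nat) (A : {set V * V})
  (k : nat) (T : 'I_k -> V * V)
  (HE : forall e, e \in E -> #|e| = 2)
  (Hw : forall e, e \in E -> (0 < w e)%N)
  (Hconn : forall i : 'I_k, exists p, is_path E A (T i).1 (T i).2 p) :
  (exists P : profile V k,
      optimal_profile E w A T P /\ nash_equilibrium E w A T P) /\
  (forall P : profile V k,
      optimal_profile E w A T P -> nash_equilibrium E w A T P).
Proof.
split; last exact: optimal_profile_nash.
pose P0 : profile V k := fun i => xchoose (Hconn i).
have P0_valid : valid_profile E A T P0 by move=> i; exact: xchooseP.
have [P P_valid P_min] := nat_valued_minimizer (total_cost E w T) P0_valid.
have P_opt : optimal_profile E w A T P by split.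
by exists P; split; last exact: optimal_profile_nash.
Qed.
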